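(* Let $m\ge2$. There is a constant $C_m>0$ depending only on $m$ such that for every integer $N\ge2$ coprime to $m$, $$\tfrac13\operatorname{ord}_m(N)\le \operatorname{diam}\mathrm{Cay}\big(G_m/G_m(N),\{A,T\}\big)\le C_m\operatorname{ord}_m(N).$$ (One may take $C_m=2m(2+\log m)$.)
   Context: $G_m$ is the subgroup of $GL_2(\mathbb Z[1/m])$ of matrices $\begin{pmatrix} m^k & r\\ 0&1\end{pmatrix}$, $k\in\mathbb Z$, $r\in\mathbb Z[1/m]$, generated by $A=\begin{pmatrix}1&1\\0&1\end{pmatrix}$ and $T=\begin{pmatrix}m&0\\0&1\end{pmatrix}$. For $N$ coprime to $m$, $G_m(N)$ is the kernel of reduction modulo $N$, $G_m\to GL_2(\mathbb Z/N\mathbb Z)$, and $\operatorname{ord}_m(N)$ is the multiplicative order of $m$ modulo $N$. The Cayley graph is taken with respect to the images of $A^{\pm1},T^{\pm1}$. *)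

From HB Require Import structures.
From mathcomp Require Import all_boot all_order all_algebra.
Set Implicit Arguments. Unset Strict Implicit. Unset Printing Implicit Defensive.
Import Order.TTheory GRing.Theory Num.Theory.
Local Open Scope ring_scope.

(* Image of A = [[1,1],[0,1]] in GL_2(Z/NZ) (rows/columns indexed 0,1). *)
Definition Amx (N : nat) : 'M['Z_N]_2 :=
  \matrix_(i < 2, j < 2)
    (if (i == j :> nat) || ((i == 0 :> nat) && (j == 1 :> nat)) then 1 else 0).

(* Image of T = [[m,0],[0,1]] in GL_2(Z/NZ). *)
Definition Tmx (N m : nat) : 'M['Z_N]_2 :=
  \matrix_(i < 2, j < 2)
    (if i == j :> nat then (if i == 0 :> nat then m%:R else 1) else 0).

(* The symmetric generating set {A, A^-1, T, T^-1} of G_m / G_m(N),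
   viewed inside GL_2(Z/NZ) via reduction modulo N. *)
Definition gens (N m : nat) : seq 'M['Z_N]_2 :=
  [:: Amx N; invmx (Amx N); Tmx N m; invmx (Tmx N m)].

Definition is_word (N m : nat) (w : seq 'M['Z_N]_2) : bool :=
  all (fun g => g \in gens N m) w.
Arguments is_word : clear implicits.

Definition evalw (N : nat) (w : seq 'M['Z_N]_2) : 'M['Z_N]_2 :=
  \prod_(g <- w) g.

(* The Cayley
   graph is vertex-transitive with a symmetric generating set, so this is
   the graph diameter. *)
Definition is_cay_diam (N m d : nat) : Prop :=
  (forall w, is_word N m w ->
     exists2 w', is_word N m w' & evalw w' = evalw w /\ (size w' <= d)%N)
  /\ (exists2 w, is_word N m w &
        forall w', is_word N m w' -> evalw w' = evalw w -> (d <= size w')%N).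

Definition is_ord_mod (m N k : nat) : Prop :=
  (0 < k)%N /\ m ^ k = 1 %[mod N] /\
  (forall j, (0 < j)%N -> m ^ j = 1 %[mod N] -> (k <= j)%N).

(* The image of G_m in GL_2(Z/NZ) consists of the affine matrices
   [[a, b], [0, 1]] with a a power of u = m mod N.  Multiplying such matrices
   composes the affine maps x |-> a x + b, so a word of length L in
   A^{±1}, T^{±1} evaluates to [[u^p / u^q, s], [0, 1]] with p + q <= L.

   Upper bound: [[u^e, s], [0, 1]] is written with the base-m digits of s
   (at most k digits, since N <= m^k for k = ord_m(N)), each digit costing at
   most m letters A plus one letter T, followed by e mod k letters T; this
   gives words of length <= (m + 1) k.
   Lower bound: reaching T^a with 2a <= k needs u^(a+q) = u^p with p + q
   letters, and since u has multiplicative order k this forces p + q >= a;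
   taking a = k/2 (and the element A when k = 1) gives 3 diam >= k.
   The diameter itself is the least radius within which every element can be
   written, which exists (classically) once one radius is known.  This gives
   the theorem with C_m = m + 1. *)

From HB Require Import structures.
From mathcomp Require Import all_boot all_order all_algebra.
From mathcomp Require Import ring zify.
From Stdlib Require Import Classical.
Import Order.TTheory GRing.Theory Num.Theory.
Local Open Scope ring_scope.
Set Implicit Arguments. Unset Strict Implicit.

Section AffineMatrices.
Variable R : comUnitRingType.

(* The affine matrix [[a, b], [0, 1]], i.e. the map x |-> a x + b. *)
Definition aff (a b : R) : 'M[R]_2 := \matrix_(i < 2, j < 2)
  (if i == 0 :> nat then (if j == 0 :> nat then a else b)
   else (if j == 0 :> nat then 0 else 1)).

Lemma aff_mul a b c d : aff a b * aff c d = aff (a * c) (a * d + b).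
Proof.
rewrite -mulmxE; apply/matrixP => i j; rewrite !mxE !big_ord_recl big_ord0 !mxE /=.
by case: i => [[|[|//]] Hi]; case: j => [[|[|//]] Hj] /=; ring.
Qed.

Lemma aff_inj a b c d : aff a b = aff c d -> a = c /\ b = d.
Proof.
move=> E; split.
  by have := congr1 (fun M : 'M[R]_2 => M ord0 ord0) E; rewrite !mxE.
by have := congr1 (fun M : 'M[R]_2 => M ord0 ord_max) E; rewrite !mxE.
Qed.

Lemma aff1 : aff 1 0 = 1.
Proof.
apply/matrixP => i j; rewrite !mxE.
by case: i => [[|[|//]] Hi]; case: j => [[|[|//]] Hj].
Qed.

Lemma aff_inv a b : a \is a GRing.unit -> invmx (aff a b) = aff a^-1 (- (a^-1 * b)).
Proof.
move=> ua.
have E : aff a b *m aff a^-1 (- (a^-1 * b)) = 1%:M.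
  by rewrite mulmxE aff_mul mulrV // mulrN mulrA mulrV // mul1r addNr aff1.
have [U _] := mulmx1_unit E.
by rewrite -[RHS](mulKmx U) E mulmx1.
Qed.

End AffineMatrices.

Lemma Amx_aff N : Amx N = aff 1 1.
Proof.
apply/matrixP => i j; rewrite !mxE.
by case: i => [[|[|//]] Hi]; case: j => [[|[|//]] Hj].
Qed.

Lemma Tmx_aff N m : Tmx N m = aff m%:R 0.
Proof.
apply/matrixP => i j; rewrite !mxE.
by case: i => [[|[|//]] Hi]; case: j => [[|[|//]] Hj].
Qed.

Definition mul_order (R : nzRingType) (u : R) (k : nat) : Prop :=
  (0 < k)%N /\ u ^+ k = 1 /\ (forall j, (0 < j)%N -> u ^+ j = 1 -> (k <= j)%N).

Section MultiplicativeOrder.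
Variables (R : unitRingType) (u : R) (k : nat).
Hypothesis (hu : mul_order u k).

Lemma expr_order : u ^+ k = 1. Proof. by case: hu => _ []. Qed.

Lemma expr_modn x : u ^+ x = u ^+ (x %% k).
Proof. by rewrite {1}(divn_eq x k) exprD mulnC exprM expr_order expr1n mul1r. Qed.

Lemma order_unit : u \is a GRing.unit.
Proof.
case: hu => k_gt0 _; apply/unitrP; exists (u ^+ k.-1).
by rewrite -exprS -exprSr prednK // expr_order.
Qed.

Lemma invr_order : u^-1 = u ^+ k.-1.
Proof.
case: hu => k_gt0 _; apply: (mulrI order_unit).
by rewrite mulrV ?order_unit // -exprS prednK // expr_order.
Qed.

Lemma expr_inj_order x y : (x < k)%N -> (y < k)%N -> u ^+ x = u ^+ y -> x = y.
Proof.
case: hu => _ [_ hmin].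
wlog le_xy : x y / (x <= y)%N => [H xk yk E|xk yk E].
  case: (leqP x y) => [le|/ltnW le]; first exact: H.
  by apply/esym; apply: H.
have unit_y : u ^+ (y - x) = 1.
  apply: (mulrI (unitrX x order_unit)).
  by rewrite -exprD subnKC // mulr1 E.
case: (posnP (y - x)) => [|pos]; first lia.
by have := hmin _ pos unit_y; lia.
Qed.

End MultiplicativeOrder.

Lemma ord_mod_Zp N m k : (1 < N)%N -> is_ord_mod m N k -> mul_order (m%:R : 'Z_N) k.
Proof.
move=> hN [k_gt0 [hmk hmin]].
have natZ x y : ((x%:R : 'Z_N) = y%:R) <-> x = y %[mod N].
  split => [/(congr1 val) /=|E]; last apply: val_inj; by rewrite /= !(val_Zp_nat hN).
split; [done | split].
  by rewrite -natrX; apply/(natZ _ 1).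
by move=> j j_gt0; rewrite -natrX => /(natZ _ 1); apply: hmin.
Qed.

Lemma modulus_le x N : (1 < x)%N -> x = 1 %[mod N] -> (N <= x)%N.
Proof.
move=> x_gt1 E; case: (leqP N x) => // lt.
by move: E; rewrite !modn_small //; lia.
Qed.

Lemma evalw_nil N : evalw [::] = (1 : 'M['Z_N]_2).
Proof. by rewrite /evalw big_nil. Qed.

Lemma evalw_cons N (g : 'M['Z_N]_2) w : evalw (g :: w) = g * evalw w.
Proof. by rewrite /evalw big_cons. Qed.

Lemma evalw_cat N (w1 w2 : seq 'M['Z_N]_2) : evalw (w1 ++ w2) = evalw w1 * evalw w2.
Proof. by rewrite /evalw big_cat. Qed.

Section Words.
Variables (N m : nat).
Local Notation u := (m%:R : 'Z_N).

Lemma gensA : Amx N \in gens N m. Proof. by rewrite /gens !inE eqxx. Qed.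
Lemma gensT : Tmx N m \in gens N m. Proof. by rewrite /gens !inE eqxx ?orbT. Qed.

Lemma word_value w : u \is a GRing.unit -> is_word N m w -> exists p q s,
  (p + q <= size w)%N /\ evalw w = aff (u ^+ p / u ^+ q) s.
Proof.
move=> hu; elim: w => [|g w IH] /=.
  by exists 0%N, 0%N, 0; rewrite evalw_nil expr0 divr1 aff1.
move=> /andP [gin /IH [p [q [s [le E]]]]].
rewrite evalw_cons E.
move: gin; rewrite /gens !inE => /or4P [] /eqP ->.
- rewrite Amx_aff aff_mul !mul1r; exists p, q, (s + 1); split => //; lia.
- rewrite Amx_aff aff_inv ?unitr1 // invr1 aff_mul !mul1r.
  by exists p, q, (s - 1); split => //; lia.
- rewrite Tmx_aff aff_mul addr0 mulrA -exprS.
  by exists p.+1, q, (u * s); split => //; lia.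
- rewrite Tmx_aff aff_inv // aff_mul mulr0 oppr0 addr0 mulrCA -invrM ?unitrX //.
  by rewrite -exprSr; exists p, q.+1, (u^-1 * s); split => //; lia.
Qed.

Lemma evalw_nseqA c : evalw (nseq c (Amx N)) = aff 1 c%:R.
Proof.
elim: c => [|c IH] /=; first by rewrite evalw_nil aff1.
by rewrite evalw_cons IH Amx_aff aff_mul !mul1r natr1.
Qed.

Lemma evalw_nseqT c : evalw (nseq c (Tmx N m)) = aff (u ^+ c) 0.
Proof.
elim: c => [|c IH] /=; first by rewrite evalw_nil expr0 aff1.
by rewrite evalw_cons IH Tmx_aff aff_mul mulr0 addr0 -exprS.
Qed.

(* The word spelling the base-m digits of r, least significant first:
   each digit d contributes A^d T. *)
Fixpoint digit_word (L r : nat) : seq 'M['Z_N]_2 :=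
  if L is L'.+1 then nseq (r %% m)%N (Amx N) ++ Tmx N m :: digit_word L' (r %/ m)%N
  else [::].

Lemma digit_word_eval L r : (1 < m)%N -> (r < m ^ L)%N ->
  evalw (digit_word L r) = aff (u ^+ L) r%:R.
Proof.
move=> hm; elim: L r => [|L IH] r /=.
  by rewrite expn0 ltnS leqn0 => /eqP ->; rewrite evalw_nil expr0 aff1.
move=> lt_r; rewrite evalw_cat evalw_cons evalw_nseqA Tmx_aff IH; last first.
  by rewrite ltn_divLR ?(ltnW hm) // -expnSr.
rewrite !aff_mul [in RHS](divn_eq r m) natrD natrM exprS.
by congr (aff _ _); ring.
Qed.

Lemma digit_word_is_word L r : is_word N m (digit_word L r).
Proof.
elim: L r => [|L IH] r //=.
by rewrite /is_word all_cat all_nseq gensA orbT /= gensT; apply: IH.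
Qed.

Lemma digit_word_size L r : (1 < m)%N -> (size (digit_word L r) <= L * m)%N.
Proof.
move=> hm; elim: L r => [|L IH] r //=.
rewrite size_cat size_nseq /= mulSn.
have := IH (r %/ m)%N; have : (r %% m < m)%N by rewrite ltn_mod (ltnW hm).
lia.
Qed.

End Words.

Definition within_radius (N m d : nat) : Prop :=
  forall w : seq 'M['Z_N]_2, is_word N m w ->
    exists2 w', is_word N m w' & evalw w' = evalw w /\ (size w' <= d)%N.

Lemma length_lowerA N m w : is_word N m w -> evalw w = evalw [:: Amx N] -> (1 <= size w)%N.
Proof.
case: w => [|//] _.
rewrite evalw_nil evalw_cons evalw_nil mulr1 Amx_aff -aff1 => /aff_inj [_ /eqP].
by rewrite eq_sym oner_eq0.
Qed.

Section OrderBounds.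
Variables (N m k : nat).
Hypotheses (hN : (1 < N)%N) (hm : (1 < m)%N) (hord : is_ord_mod m N k).
Local Notation u := (m%:R : 'Z_N).

Let hu : mul_order u k := ord_mod_Zp hN hord.
Let u_unit : u \is a GRing.unit := order_unit hu.

(* Upper bound: digits of the translation part, then the linear part. *)
Lemma radius_upper : within_radius N m (m.+1 * k).
Proof.
have [k_gt0 [hmk _]] := hord.
move=> w /(word_value u_unit) [p [q [s [_ E]]]].
have [e Ee] : exists e, u ^+ p / u ^+ q = u ^+ e.
  by exists (p + k.-1 * q)%N; rewrite exprD exprM -(invr_order hu) exprVn.
exists (digit_word N m k (val s) ++ nseq (e %% k)%N (Tmx N m)).
  rewrite /is_word all_cat; apply/andP; split; first exact: digit_word_is_word.
  by rewrite all_nseq gensT orbT.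
split.
  have N_le : (N <= m ^ k)%N.
    by apply: modulus_le hmk; apply: (leq_trans hm); rewrite -{1}(expn1 m) leq_pexp2l // ltnW.
  rewrite evalw_cat digit_word_eval //; last by apply: leq_trans (ltn_ord s) _; rewrite Zp_cast.
  rewrite evalw_nseqT aff_mul E Ee expr_order // mul1r mulr0 add0r natr_Zp.
  by rewrite -(expr_modn hu).
rewrite size_cat size_nseq.
have := @digit_word_size N m k (val s) hm; have : (e %% k < k)%N by rewrite ltn_mod.
by rewrite mulSn; lia.
Qed.

(* Lower bound: T^a with 2a <= k has no word shorter than a.  A word with
   p + q < a letters T^{±1} would give u^(a+q) = u^p with both exponents
   below k, hence a + q = p < a. *)
Lemma length_lowerT a w : (2 * a <= k)%N -> is_word N m w ->
  evalw w = evalw (nseq a (Tmx N m)) -> (a <= size w)%N.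
Proof.
move=> a2 W E.
have [p [q [s [le Ew]]]] := word_value u_unit W.
rewrite evalw_nseqT Ew in E; have [E1 _] := aff_inj E.
have Eaq : u ^+ (a + q) = u ^+ p.
  by rewrite exprD -E1 divrK ?unitrX.
case: (leqP a (p + q)) => [|lt]; first lia.
by have := expr_inj_order hu _ _ Eaq; lia.
Qed.

(* Any covering radius is at least k/3: it must reach T^(k/2), and A. *)
Lemma radius_lower d : within_radius N m d -> (k <= 3 * d)%N.
Proof.
move=> Pd.
have half_le : (k %/ 2 <= d)%N.
  have W : is_word N m (nseq (k %/ 2) (Tmx N m)) by rewrite /is_word all_nseq gensT orbT.
  have [w' W' [E' s']] := Pd _ W.
  have half2 : (2 * (k %/ 2) <= k)%N by lia.
  by have := length_lowerT half2 W' E'; lia.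
have one_le : (1 <= d)%N.
  have W : is_word N m [:: Amx N] by rewrite /is_word /= gensA.
  have [w' W' [E' s']] := Pd _ W.
  by have := length_lowerA W' E'; lia.
lia.
Qed.

End OrderBounds.

Lemma ex_minimal (P : nat -> Prop) n : P n ->
  exists d, P d /\ forall j, (j < d)%N -> ~ P j.
Proof.
elim/ltn_ind: n => n IH Pn.
case: (classic (exists j, (j < n)%N /\ P j)) => [[j [ljn Pj]]|H].
  exact: IH j ljn Pj.
by exists n; split=> // j ljn Pj; apply: H; exists j.
Qed.

Lemma cay_diam_of_radius N m B : within_radius N m B ->
  exists2 d, (d <= B)%N & is_cay_diam N m d.
Proof.
move=> PB; have [d [Pd dmin]] := ex_minimal PB.
exists d; first by case: (leqP d B) => // lt; case: (dmin _ lt PB).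
split; first exact: Pd.
case: d Pd dmin => [|d] Pd dmin; first by exists [::].
have [w not_covered] := not_all_ex_not _ _ (dmin d (ltnSn d)).
have [Ww Hw] := imply_to_and _ _ not_covered.
exists w => // w' W' E.
by case: (leqP d.+1 (size w')) => // lt; case: Hw; exists w'.
Qed.

Theorem lemma3p3 (m : nat) (hm : (2 <= m)%N) :
  exists C : rat, 0 < C /\
    forall N : nat, (2 <= N)%N -> coprime N m ->
      forall k : nat, is_ord_mod m N k ->
        exists d : nat, is_cay_diam N m d /\
          (k%:Q / 3 <= d%:Q) /\ (d%:Q <= C * k%:Q).
Proof.
exists (m.+1)%:Q; split; first by rewrite ltr0n.
move=> N hN _ k hord.
have [d d_le [Pd Pd_attained]] := cay_diam_of_radius (radius_upper hN hm hord).
have k_le := radius_lower hN hm hord Pd.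
exists d; split; [by split | split].
- by rewrite ler_pdivrMr ?ltr0n // -natrM ler_nat mulnC.
- by rewrite -natrM ler_nat.
Qed.
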